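(* The structure $\mathbb{M}_1=(\{0,1,2\};\psi_2,\mu_2,\{0\},\{1\},\{2\})$ pp-constructs $\mathbb{M}_1''=(\{0,1,2\};\psi_2,\psi_2',\mu_2,\{0,1\},\{1,2\},\{0,2\},\{0\},\{1\},\{2\})$, and $\mathbb{M}_1''$ pp-constructs $\mathbb{M}_1$.
   Context: $\psi_2=\{(0,1),(1,0),(2,2)\}$, $\psi_2'=\{(0,1),(1,0)\}$, and $\mu_2$ is the equivalence relation on $\{0,1,2\}$ with classes $\{0,1\},\{2\}$. A relation is pp-definable in $\mathbb{A}$ if definable by a formula using the relations of $\mathbb{A}$, equality, conjunction and existential quantification. A pp-power of $\mathbb{A}$ is a structure isomorphic to one with domain $A^n$ whose $k$-ary relations, viewed as $kn$-ary relations on $A$, are pp-definable in $\mathbb{A}$. $\mathbb{A}$ pp-constructs $\mathbb{B}$ if $\mathbb{B}$ is homomorphically equivalent (homomorphisms in both directions) to a pp-power of $\mathbb{A}$. *)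

From mathcomp Require Import all_boot.
Set Implicit Arguments. Unset Strict Implicit. Unset Printing Implicit Defensive.

(* A structure on carrier D is given by its
   signature [sig] (the list of arities of its relations) and, for each index
   i < size sig, the relation [rel i], read as the set of sequences t with
   size t = nth 0 sig i and rel i t = true. *)
Record structure (D : Type) := Structure {
  sig : seq nat;
  rel : nat -> seq D -> bool }.

Definition arity (D : Type) (A : structure D) (i : nat) := nth 0 (sig A) i.

Definition hom (D E : Type) (A : structure D) (B : structure E) (h : D -> E) :=
  sig A = sig B /\
  forall i (t : seq D), i < size (sig A) -> size t = arity A i ->
    rel A i t -> rel B i (map h t).

Definition hom_equiv (D E : Type) (A : structure D) (B : structure E) :=
  (exists h, hom A B h) /\ (exists g, hom B A g).

Inductive ppformula :=
| ppRel of nat & seq nat      (* R_i(x_{v1},...,x_{vk}) *)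
| ppEq of nat & nat
| ppAnd of ppformula & ppformula
| ppEx of nat & ppformula.    (* exists x_n. phi *)

Definition upd (D : Type) (env : nat -> D) (x : nat) (a : D) : nat -> D :=
  fun y => if y == x then a else env y.

Fixpoint pp_sat (D : Type) (A : structure D) (env : nat -> D) (f : ppformula)
  : Prop :=
  match f with
  | ppRel i vs => i < size (sig A) /\ size vs = arity A i /\ rel A i (map env vs)
  | ppEq x y => env x = env y
  | ppAnd f g => pp_sat A env f /\ pp_sat A env g
  | ppEx x g => exists a : D, pp_sat A (upd env x a) g
  end.

(* The k-ary relation {t : size t = k, S t} is pp-definable in A: there is a
   pp-formula whose satisfying assignments, restricted to x_0..x_{k-1},
   are exactly the tuples of the relation (so phi only depends on them). *)
Definition pp_definable (D : Type) (A : structure D) (k : nat)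
  (S : seq D -> bool) :=
  exists f : ppformula, forall env : nat -> D,
    pp_sat A env f <-> S (mkseq env k).

(* C (with carrier D^n) is an n-th pp-power of A: each k-ary relation of C,
   viewed as a (k*n)-ary relation on D (by concatenating the n-tuples), is
   pp-definable in A. *)
Definition pp_power (D : Type) (A : structure D) (n : nat)
  (C : structure (n.-tuple D)) :=
  forall i, i < size (sig C) ->
    exists S : seq D -> bool,
      pp_definable A (arity C i * n) S /\
      forall t : seq (n.-tuple D), size t = arity C i ->
        rel C i t = S (flatten (map val t)).

(* A pp-constructs B: B is homomorphically equivalent to a pp-power of A.
   (Homomorphic equivalence is invariant under isomorphism, so it suffices
   to consider pp-powers with carrier exactly D^n, n >= 1.) *)
Definition pp_constructs (D E : Type) (A : structure D) (B : structure E) :=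
  exists n : nat, 0 < n /\
    exists C : structure (n.-tuple D), pp_power A C /\ hom_equiv B C.

Definition psi2 (s : seq nat) : bool := s \in [:: [:: 0; 1]; [:: 1; 0]; [:: 2; 2]].
Definition psi2' (s : seq nat) : bool := s \in [:: [:: 0; 1]; [:: 1; 0]].
Definition mu2 (s : seq nat) : bool :=
  s \in [:: [:: 0; 0]; [:: 0; 1]; [:: 1; 0]; [:: 1; 1]; [:: 2; 2]].
Definition unary (P : seq nat) (s : seq nat) : bool :=
  match s with [:: x] => x \in P | _ => false end.

Definition M1 : structure 'I_3 :=
  {| sig := [:: 2; 2; 1; 1; 1];
     rel := fun i s => let t := map val s in
       match i with
       | 0 => psi2 t | 1 => mu2 t
       | 2 => unary [:: 0] t | 3 => unary [:: 1] t | 4 => unary [:: 2] t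
       | _ => false end |}.

Definition M1'' : structure 'I_3 :=
  {| sig := [:: 2; 2; 2; 1; 1; 1; 1; 1; 1];
     rel := fun i s => let t := map val s in
       match i with
       | 0 => psi2 t | 1 => psi2' t | 2 => mu2 t
       | 3 => unary [:: 0; 1] t | 4 => unary [:: 1; 2] t | 5 => unary [:: 0; 2] t
       | 6 => unary [:: 0] t | 7 => unary [:: 1] t | 8 => unary [:: 2] t
       | _ => false end |}.

From mathcomp Require Import all_boot.
Set Implicit Arguments. Unset Strict Implicit. Unset Printing Implicit Defensive.

(* M1'' is interpreted in the square of M1.  On mu2-related pairs, (a, b) with
   a, b < 2 stands for a + b mod 2 and (2, 2) stands for 2.  The second
   coordinate is a free parity shift: psi2, mu2 and the constants lift
   coordinatewise, {1, 2} and {0, 2} become psi2(a, b) and a = b, and psi2' is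
   psi2 with the shift pinned to 0.  All these relations are quantifier-free
   definable and encoding/decoding are homomorphisms.  Conversely M1 is a
   reduct of M1'', and a structure pp-constructs its reducts via its first
   power. *)

Section QuantifierFreePower.
Variables (D : eqType) (A : structure D).

Fixpoint pp_qf (f : ppformula) : bool :=
  match f with
  | ppRel _ _ | ppEq _ _ => true
  | ppAnd f g => pp_qf f && pp_qf g
  | ppEx _ _ => false
  end.

Fixpoint pp_vars (f : ppformula) : seq nat :=
  match f with
  | ppRel _ vs => vs
  | ppEq x y => [:: x; y]
  | ppAnd f g => pp_vars f ++ pp_vars g
  | ppEx _ _ => [::]
  end.

Fixpoint pp_eval (env : nat -> D) (f : ppformula) : bool :=
  match f with
  | ppRel i vs => [&& i < size (sig A), size vs == arity A i & rel A i (map env vs)]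
  | ppEq x y => env x == env y
  | ppAnd f g => pp_eval env f && pp_eval env g
  | ppEx _ _ => false
  end.

Lemma pp_sat_qf env f : pp_qf f -> pp_sat A env f <-> pp_eval env f.
Proof.
elim: f => [i vs|x y|f IHf g IHg|//] /=.
- by split=> [[-> [-> ->]]|/and3P[-> /eqP-> ->]]; rewrite ?eqxx.
- by split=> [->|/eqP].
- case/andP=> /IHf{}IHf /IHg{}IHg.
  by split=> [[/IHf-> /IHg->]|/andP[/IHf ? /IHg ?]].
Qed.

Lemma eq_pp_eval env env' f :
  {in pp_vars f, env =1 env'} -> pp_eval env f = pp_eval env' f.
Proof.
elim: f => [i vs|x y|f IHf g IHg|//] /= eq_env.
- by rewrite (@eq_in_map _ _ env env' vs).1.
- by rewrite !eq_env // !inE eqxx ?orbT.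
- by rewrite IHf ?IHg // => v v_g; rewrite eq_env // mem_cat v_g ?orbT.
Qed.

Variable d0 : D.

(* In [phi i], the variable k * n + j is the j-th coordinate of the k-th
   argument; [d0] is only read out of range. *)
Definition qf_power n (sg : seq nat) (phi : nat -> ppformula) : structure (n.-tuple D) :=
  Structure sg (fun i t => pp_eval (nth d0 (flatten (map val t))) (phi i)).

Lemma qf_power_pp_power n sg phi :
  (forall i, i < size sg ->
     pp_qf (phi i) && all (fun v => v < nth 0 sg i * n) (pp_vars (phi i))) ->
  pp_power A (qf_power n sg phi).
Proof.
move=> phi_qf i lt_i_sg.
have /andP[qf_phi /allP phi_bounded] := phi_qf i lt_i_sg.
exists (fun s => pp_eval (nth d0 s) (phi i)); split=> //.
exists (phi i) => env /=; rewrite -(@eq_pp_eval env); first exact: pp_sat_qf.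
by move=> v /phi_bounded v_lt; rewrite nth_mkseq.
Qed.

End QuantifierFreePower.

Definition reduct (D : Type) (f : nat -> nat) (A B : structure D) : Prop :=
  forall i, i < size (sig B) ->
    [/\ f i < size (sig A), arity A (f i) = arity B i & rel B i =1 rel A (f i)].

Definition unary_power (D : Type) (B : structure D) : structure (1.-tuple D) :=
  Structure (sig B) (fun i (t : seq (1.-tuple D)) => rel B i (map (@thead 0 D) t)).

Lemma flatten_tuple1 (T : Type) (t : seq (1.-tuple T)) :
  flatten (map val t) = map (@thead 0 T) t.
Proof. by elim: t => //= -[[|x []] // ?] t ->. Qed.

Lemma unary_power_hom_equiv (D : Type) (B : structure D) :
  hom_equiv B (unary_power B).
Proof.
split; [exists (fun a => [tuple a]) | exists (@thead 0 D)]; split=> // i t _ _ /=.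
by rewrite -map_comp map_id.
Qed.

Lemma reduct_pp_constructs (D : Type) (f : nat -> nat) (A B : structure D) :
  reduct f A B -> pp_constructs A B.
Proof.
move=> fAB; exists 1; split=> //; exists (unary_power B); split.
  move=> i /fAB[lt_fi_A ar_fi rel_fi]; exists (rel B i); split.
    exists (ppRel (f i) (iota 0 (arity B i))) => env /=.
    by rewrite muln1 size_iota ar_fi rel_fi; split=> [[_ []]|].
  by move=> t _; rewrite flatten_tuple1.
exact: unary_power_hom_equiv.
Qed.

Definition M1_psi2 x y := ppRel 0 [:: x; y].
Definition M1_mu2 x y := ppRel 1 [:: x; y].
Definition M1_const c x := ppRel (2 + c) [:: x].

Definition xor_formula (i : nat) : ppformula :=
  match i with
  | 0 => ppAnd (M1_mu2 0 1) (ppAnd (M1_mu2 2 3) (ppAnd (M1_psi2 0 2) (ppEq 1 3)))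
  | 1 => ppAnd (M1_mu2 0 1) (ppAnd (M1_mu2 2 3)
           (ppAnd (M1_psi2 0 2) (ppAnd (ppEq 1 3) (M1_const 0 1))))
  | 2 => ppAnd (M1_mu2 0 1) (ppAnd (M1_mu2 2 3) (M1_mu2 0 2))
  | 3 => ppAnd (M1_mu2 0 1) (M1_const 0 1)
  | 4 => ppAnd (M1_mu2 0 1) (M1_psi2 0 1)
  | 5 => ppAnd (M1_mu2 0 1) (ppEq 0 1)
  | 6 => ppAnd (M1_mu2 0 1) (ppAnd (M1_const 0 0) (M1_const 0 1))
  | 7 => ppAnd (M1_mu2 0 1) (ppAnd (M1_const 1 0) (M1_const 0 1))
  | _ => ppAnd (M1_mu2 0 1) (M1_const 2 0)
  end.

Definition M1_xor : structure (2.-tuple 'I_3) := qf_power M1 ord0 2 (sig M1'') xor_formula.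

Definition xor_encode (x : 'I_3) : 2.-tuple 'I_3 :=
  if val x == 1 then [tuple x; ord0] else [tuple x; x].

Definition xor_decode (u : 2.-tuple 'I_3) : 'I_3 :=
  let a := tnth u ord0 in
  if val a == 2 then a else if a == tnth u ord_max then ord0 else Ordinal (isT : 1 < 3).

Lemma M1_xor_pp_power : pp_power M1 M1_xor.
Proof. by apply: qf_power_pp_power => -[|[|[|[|[|[|[|[|[|i]]]]]]]]]. Qed.

Ltac case_ord3 x := let m := fresh "m" in case: x => [[|[|[|m]]] ?] //.

Lemma xor_encode_hom : hom M1'' M1_xor xor_encode.
Proof.
split=> // i t; rewrite /arity.
case: i => [|[|[|[|[|[|[|[|[|i]]]]]]]]] //= _.
all: case: t => [|x [|y [|z t]]] //= _.
1-3: by case_ord3 x; case_ord3 y.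
all: by case_ord3 x.
Qed.

Lemma tuple2P (T : Type) (u : 2.-tuple T) : exists a b, u = [tuple a; b].
Proof. by case: u => [[|a [|b []]] // ?]; exists a, b; apply: val_inj. Qed.

Ltac case_pair u := let a := fresh "a" in let b := fresh "b" in
  case: (tuple2P u) => a [b ->]; case_ord3 a; case_ord3 b.

Lemma xor_decode_hom : hom M1_xor M1'' xor_decode.
Proof.
split=> // i t; rewrite /arity.
case: i => [|[|[|[|[|[|[|[|[|i]]]]]]]]] //= _.
all: case: t => [|x [|y [|z t]]] //= _.
1-3: by case_pair x; case_pair y.
all: by case_pair x.
Qed.

Theorem lemma6p4 : pp_constructs M1 M1'' /\ pp_constructs M1'' M1.
Proof.
split.
  exists 2; split=> //; exists M1_xor; split; first exact: M1_xor_pp_power.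
  by split; [exists xor_encode; exact: xor_encode_hom | exists xor_decode; exact: xor_decode_hom].
apply: (@reduct_pp_constructs _ (nth 0 [:: 0; 2; 6; 7; 8])).
by case=> [|[|[|[|[|i]]]]].
Qed.
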